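(* There is a constant $C$, depending only on $\Gamma$ and $V$, such that every $(g,a)\in\Gamma$ satisfies $\|a_\perp\|\le C$. Moreover, if $(g,a)\in\Gamma_1$, then $a_\perp=0$.
   Context: $E(n)$ is the Euclidean group, with elements $(g,a)$, $g\in O(n)$, $a\in\mathbb R^n$, acting by $(g,a)x=gx+a$. $\Gamma\subset E(n)$ is a discrete, fixed-point-free subgroup. $\Gamma^*$ is the intersection of $\Gamma$ with the identity component of the closure of $\Gamma\cdot\mathbb R^n$ in $E(n)$. By a theorem of Wolf, $\Gamma^*$ is a normal subgroup of $\Gamma$ of finite index. There exist a subspace $V\subset\mathbb R^n$ and a toral subgroup $T\subset O(n)$ such that: - $T$ acts trivially on $V$; - $\Gamma^*\subset T\cdot V$, so every $(h,b)\in\Gamma^*$ has $b\in V$; - $\Gamma^*$ is isomorphic to a discrete uniform subgroup of $V$. Write $\mathbb R^n=V_\perp\oplus V$ orthogonally, and for $a\in\mathbb R^n$ write $a=a_\perp+a_=$ with $a_\perp\in V_\perp$ and $a_=\in V$. Define $\Gamma_1=\{(g,a)\in\Gamma: g|_{V_\perp}=I_{V_\perp}\}$. *)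

From mathcomp Require Import all_boot.
From Stdlib Require Import Reals.

Set Implicit Arguments.
Unset Strict Implicit.
Unset Printing Implicit Defensive.

Local Open Scope R_scope.

Definition vec (n : nat) := 'I_n -> R.
Definition mat (n : nat) := 'I_n -> 'I_n -> R.

Definition rsum (n : nat) (F : 'I_n -> R) : R := \big[Rplus/R0]_(i < n) F i.

Definition vzero (n : nat) : vec n := fun _ => 0.
Definition vadd (n : nat) (u v : vec n) : vec n := fun i => u i + v i.
Definition vopp (n : nat) (u : vec n) : vec n := fun i => - u i.
Definition vsub (n : nat) (u v : vec n) : vec n := fun i => u i - v i.
Definition vscale (n : nat) (c : R) (u : vec n) : vec n := fun i => c * u i.
Definition dot (n : nat) (u v : vec n) : R := rsum (fun i => u i * v i).
Definition vnorm (n : nat) (u : vec n) : R := sqrt (dot u u).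

Definition idm (n : nat) : mat n := fun i j => if i == j then 1 else 0.
Definition mtr (n : nat) (g : mat n) : mat n := fun i j => g j i.
Definition mmul (n : nat) (g h : mat n) : mat n :=
  fun i j => rsum (fun k => g i k * h k j).
Definition mapp (n : nat) (g : mat n) (v : vec n) : vec n :=
  fun i => rsum (fun k => g i k * v k).

Definition orthogonal (n : nat) (g : mat n) : Prop :=
  forall i j, mmul (mtr g) g i j = idm i j.

Definition subspace (n : nat) (V : vec n -> Prop) : Prop :=
  V (@vzero n) /\ (forall u v, V u -> V v -> V (vadd u v)) /\
  (forall c u, V u -> V (vscale c u)).

Definition vperp (n : nat) (V : vec n -> Prop) (u : vec n) : Prop :=
  forall v, V v -> dot u v = 0.

(* u is the component a_perp of a in R^n = V_perp (+) V *)
Definition perp_part (n : nat) (V : vec n -> Prop) (a u : vec n) : Prop :=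
  vperp V u /\ V (vsub a u).

Definition euc (n : nat) := (mat n * vec n)%type.

Definition inE (n : nat) (x : euc n) : Prop := orthogonal x.1.
Definition eid (n : nat) : euc n := (@idm n, @vzero n).
Definition emul (n : nat) (x y : euc n) : euc n :=
  (mmul x.1 y.1, vadd (mapp x.1 y.2) x.2).
Definition einv (n : nat) (x : euc n) : euc n :=
  (mtr x.1, vopp (mapp (mtr x.1) x.2)).
Definition eact (n : nat) (x : euc n) (v : vec n) : vec n :=
  vadd (mapp x.1 v) x.2.
Definition transl (n : nat) (t : vec n) : euc n := (@idm n, t).

(* topology of E(n) (as a subset of R^(n*n) x R^n, sup metric) *)
Definition near (n : nat) (eps : R) (x y : euc n) : Prop :=
  (forall i j, Rabs (x.1 i j - y.1 i j) < eps) /\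
  (forall i, Rabs (x.2 i - y.2 i) < eps).

Definition eopen (n : nat) (U : euc n -> Prop) : Prop :=
  forall x, U x -> exists eps, 0 < eps /\ forall y, near eps x y -> U y.

Definition eclosure (n : nat) (S : euc n -> Prop) (x : euc n) : Prop :=
  inE x /\ forall eps, 0 < eps -> exists y, S y /\ near eps x y.

Definition econnected (n : nat) (A : euc n -> Prop) : Prop :=
  ~ exists U W : euc n -> Prop,
      eopen U /\ eopen W /\
      (forall x, A x -> U x \/ W x) /\
      (forall x, A x -> U x -> W x -> False) /\
      (exists x, A x /\ U x) /\ (exists x, A x /\ W x).

Definition idcomp (n : nat) (S : euc n -> Prop) (x : euc n) : Prop :=
  exists A : euc n -> Prop,
    econnected A /\ (forall y, A y -> S y) /\ A (@eid n) /\ A x.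

Definition esubgroup (n : nat) (G : euc n -> Prop) : Prop :=
  (forall x, G x -> inE x) /\ G (@eid n) /\
  (forall x y, G x -> G y -> G (emul x y)) /\
  (forall x, G x -> G (einv x)).

Definition ediscrete (n : nat) (G : euc n -> Prop) : Prop :=
  forall x, G x -> exists eps, 0 < eps /\
    forall y, G y -> near eps x y -> y = x.

Definition fixed_point_free (n : nat) (G : euc n -> Prop) : Prop :=
  forall x, G x -> x <> @eid n -> forall v, eact x v <> v.

Definition gamRn (n : nat) (G : euc n -> Prop) (x : euc n) : Prop :=
  exists y t, G y /\ x = emul y (transl t).

Definition gamstar (n : nat) (G : euc n -> Prop) (x : euc n) : Prop :=
  G x /\ idcomp (eclosure (gamRn G)) x.

Definition normal_in (n : nat) (H G : euc n -> Prop) : Prop :=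
  forall x y, G x -> H y -> H (emul (emul x y) (einv x)).

Definition finite_index (n : nat) (H G : euc n -> Prop) : Prop :=
  exists reps : list (euc n),
    forall x, G x -> exists r y, List.In r reps /\ G r /\ H y /\ x = emul r y.

Definition gamma1 (n : nat) (G : euc n -> Prop) (V : vec n -> Prop)
  (x : euc n) : Prop :=
  G x /\ forall u, vperp V u -> mapp x.1 u = u.

(* closed, connected, abelian subgroup of O(n) (= compact connected abelian
   Lie subgroup, i.e. a torus) ; topology of O(n) via the entries *)
Definition mnear (n : nat) (eps : R) (g h : mat n) : Prop :=
  forall i j, Rabs (g i j - h i j) < eps.
Definition mopen (n : nat) (U : mat n -> Prop) : Prop :=
  forall g, U g -> exists eps, 0 < eps /\ forall h, mnear eps g h -> U h.
Definition mconnected (n : nat) (A : mat n -> Prop) : Prop :=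
  ~ exists U W : mat n -> Prop,
      mopen U /\ mopen W /\
      (forall g, A g -> U g \/ W g) /\
      (forall g, A g -> U g -> W g -> False) /\
      (exists g, A g /\ U g) /\ (exists g, A g /\ W g).
Definition toral (n : nat) (T : mat n -> Prop) : Prop :=
  (forall g, T g -> orthogonal g) /\ T (@idm n) /\
  (forall g h, T g -> T h -> T (mmul g h)) /\
  (forall g, T g -> T (mtr g)) /\
  (forall g h, T g -> T h -> mmul g h = mmul h g) /\
  (forall g, orthogonal g ->
     (forall eps, 0 < eps -> exists h, T h /\ mnear eps g h) -> T g) /\
  mconnected T.

Definition discrete_uniform_in (n : nat) (V L : vec n -> Prop) : Prop :=
  (forall v, L v -> V v) /\ L (@vzero n) /\
  (forall u v, L u -> L v -> L (vsub u v)) /\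
  (forall u, L u -> exists eps, 0 < eps /\
     forall v, L v -> vnorm (vsub u v) < eps -> v = u) /\
  (exists Rad, forall v, V v -> exists l, L l /\ vnorm (vsub v l) <= Rad).

Definition iso_to_lattice (n : nat) (H : euc n -> Prop) (V : vec n -> Prop)
  : Prop :=
  exists (L : vec n -> Prop) (phi : euc n -> vec n),
    discrete_uniform_in V L /\
    (forall x, H x -> L (phi x)) /\
    (forall x y, H x -> H y -> phi x = phi y -> x = y) /\
    (forall l, L l -> exists x, H x /\ phi x = l) /\
    (forall x y, H x -> H y -> phi (emul x y) = vadd (phi x) (phi y)).

(* Write an element of Gamma as r h with r from a finite set of coset
   representatives and h in Gamma^*.  Then r h = (r h r^-1) r, and since the
   conjugate r h r^-1 lies in Gamma^* its translation part lies in V while its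
   rotation part is orthogonal; hence the V_perp-component of the translation
   part of r h is the projection of a rotated copy of the translation part of r,
   whose length is bounded independently of h.
   An element x of Gamma_1 fixes V_perp pointwise, so the V_perp-component of
   the translation part of x^m is m times that of x; as these components stay
   bounded, the component of x vanishes. *)

From Pilot Require Import Defs.
From Stdlib Require Import Reals FunctionalExtensionality.
From mathcomp Require Import all_boot all_order all_algebra.
From mathcomp Require Import Rstruct ring lra.
Import Order.TTheory GRing.Theory Num.Theory.
Set Implicit Arguments.
Unset Strict Implicit.
Local Open Scope ring_scope.

Lemma dotE n (u v : vec n) : dot u v = \sum_(i < n) u i * v i.
Proof. by []. Qed.

Lemma mappE n (g : mat n) v i : mapp g v i = \sum_(k < n) g i k * v k.
Proof. by []. Qed.

Lemma dotC n (u v : vec n) : dot u v = dot v u.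
Proof. by rewrite !dotE; apply: eq_bigr => i _; rewrite mulrC. Qed.

Lemma dotDl n (u v w : vec n) : dot (vadd u v) w = dot u w + dot v w.
Proof. by rewrite !dotE -big_split; apply: eq_bigr => i _; rewrite mulrDl. Qed.

Lemma dotBl n (u v w : vec n) : dot (vsub u v) w = dot u w - dot v w.
Proof. by rewrite !dotE -sumrB; apply: eq_bigr => i _; rewrite mulrBl. Qed.

Lemma dot0l n (u : vec n) : dot (@vzero n) u = 0.
Proof. by rewrite dotE big1 // => i _; rewrite mul0r. Qed.

Lemma dot_self_ge0 n (u : vec n) : 0 <= dot u u.
Proof. by rewrite dotE; apply: sumr_ge0 => i _; rewrite -expr2 sqr_ge0. Qed.

Lemma dot_self_eq0 n (u : vec n) : dot u u = 0 -> u = @vzero n.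
Proof.
rewrite dotE => /eqP; rewrite psumr_eq0 => [/allP u0|i _]; last by rewrite -expr2 sqr_ge0.
apply: functional_extensionality => i.
have /implyP/(_ isT) := u0 i (mem_index_enum i).
by rewrite /= mulf_eq0 orbb => /eqP.
Qed.

Lemma two_dot_le n (u v : vec n) : 2 * dot u v <= dot u u + dot v v.
Proof.
have := dot_self_ge0 (vsub u v).
by rewrite dotBl (dotC u) (dotC v) !dotBl (dotC u v); lra.
Qed.

Lemma mapp_mmul n (g h : mat n) v : mapp (mmul g h) v = mapp g (mapp h v).
Proof.
apply: functional_extensionality => i; rewrite !mappE.
under eq_bigr do rewrite [mmul _ _ _ _]/= /rsum mulr_suml.
rewrite exchange_big; apply: eq_bigr => k _.
by rewrite mappE mulr_sumr; apply: eq_bigr => l _; rewrite mulrA.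
Qed.

Lemma mapp_vopp n (g : mat n) v : mapp g (vopp v) = vopp (mapp g v).
Proof.
apply: functional_extensionality => i; rewrite /vopp !mappE.
change (\sum_(k < n) g i k * - v k = - \sum_(k < n) g i k * v k).
by rewrite -sumrN; apply: eq_bigr => k _; rewrite mulrN.
Qed.

Lemma orthogonal_dot n (g : mat n) (u v : vec n) :
  Defs.orthogonal g -> dot (mapp g u) (mapp g v) = dot u v.
Proof.
move=> og; rewrite !dotE.
under eq_bigr do rewrite !mappE mulr_suml; under eq_bigr do under eq_bigr do rewrite mulr_sumr.
rewrite exchange_big; apply: eq_bigr => k _; rewrite exchange_big.
transitivity (\sum_(l < n) u k * v l * idm k l).
  apply: eq_bigr => l _; rewrite -(og k l) /mmul /rsum mulr_sumr.
  by apply: eq_bigr => i _; rewrite /mtr RmultE; ring.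
rewrite (bigD1 k) //= big1 => [|l /negbTE]; first by rewrite /idm eqxx addr0 mulr1.
by rewrite /idm eq_sym => ->; rewrite mulr0.
Qed.

Lemma perp_part_dot n (V : vec n -> Prop) a u :
  perp_part V a u -> dot a u = dot u u.
Proof.
move=> [uV aVu]; have : dot (vsub a u) u = 0 by rewrite dotC; apply: uV.
by rewrite dotBl => /eqP; rewrite subr_eq0 => /eqP.
Qed.

(* r h = (r h r^-1) r, read off on translation parts. *)
Lemma emul_transl_conj n (r h : euc n) :
  (emul r h).2 = vadd (mapp (emul (emul r h) (einv r)).1 r.2)
                      (emul (emul r h) (einv r)).2.
Proof.
rewrite /emul /einv /= mapp_mmul mapp_vopp mapp_mmul.
by apply: functional_extensionality => i; rewrite /vadd /vopp !RplusE RoppE; lra.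
Qed.

Fixpoint epow n (x : euc n) (m : nat) : euc n :=
  if m is m'.+1 then emul x (epow x m') else @eid n.

Lemma esubgroup_epow n (G : euc n -> Prop) x m :
  esubgroup G -> G x -> G (epow x m).
Proof. by move=> [_ [G1 [GM _]]] Gx; elim: m => [|m IH] //=; apply: GM. Qed.

Lemma dot_epow_transl n (x : euc n) u m :
  Defs.orthogonal x.1 -> mapp x.1 u = u -> dot (epow x m).2 u = m%:R * dot x.2 u.
Proof.
move=> ox xu; elim: m => [|m IH] /=; first by rewrite dot0l mul0r.
by rewrite dotDl -[in dot _ u]xu orthogonal_dot // IH -nat1r; ring.
Qed.

Lemma bounded_multiples_eq0 (s c : R) :
  0 <= s -> (forall m : nat, m%:R * s <= c) -> s = 0.
Proof.
move=> s0 sc; apply/eqP; rewrite eq_le s0 andbT; apply/negP => /negP.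
rewrite -ltNge => sp.
have c0 : 0 <= c by have := sc 0%N; rewrite mul0r.
have /archi_boundP := divr_ge0 c0 s0; rewrite ltr_pdivrMr //.
by have := sc (Num.bound (c / s)); lra.
Qed.

Definition transl_sqnorm_sum n (reps : seq (euc n)) : R :=
  \sum_(r <- reps) dot r.2 r.2.

Lemma transl_sqnorm_le_sum n (reps : seq (euc n)) r :
  List.In r reps -> dot r.2 r.2 <= transl_sqnorm_sum reps.
Proof.
rewrite /transl_sqnorm_sum; elim: reps => [|r' reps IH] //= [<-|rin];
  rewrite big_cons.
  by rewrite lerDl sumr_ge0 // => ? _; apply: dot_self_ge0.
by rewrite -[X in X <= _]add0r lerD ?dot_self_ge0 ?IH.
Qed.

Section PerpBound.

Variables (n : nat) (Gam : euc n -> Prop) (V : vec n -> Prop) (T : mat n -> Prop).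
Variable reps : seq (euc n).
Hypothesis Gam_sub : esubgroup Gam.
Hypothesis star_normal : normal_in (gamstar Gam) Gam.
Hypothesis Gam_cosets : forall x, Gam x ->
  exists r y, List.In r reps /\ Gam r /\ gamstar Gam y /\ x = emul r y.
Hypothesis T_orthogonal : forall g, T g -> Defs.orthogonal g.
Hypothesis star_TV : forall x, gamstar Gam x -> T x.1 /\ V x.2.

Let D := transl_sqnorm_sum reps.

Lemma two_dot_transl_perp_le y u :
  Gam y -> vperp V u -> 2 * dot y.2 u <= D + dot u u.
Proof.
move=> Gy uV; have [r [h [rin [Gr [star_h ->]]]]] := Gam_cosets Gy.
set z := emul (emul r h) (einv r).
have [Tz Vz] : T z.1 /\ V z.2 by apply: star_TV; apply: star_normal.
have zu0 : dot z.2 u = 0 by rewrite dotC; apply: uV.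
have := two_dot_le (mapp z.1 r.2) u.
rewrite emul_transl_conj -/z dotDl zu0 addr0 (orthogonal_dot _ _ (T_orthogonal Tz)).
by have := transl_sqnorm_le_sum rin; rewrite -/D; lra.
Qed.

Lemma perp_part_sqnorm_le x u : Gam x -> perp_part V x.2 u -> dot u u <= D.
Proof.
move=> Gx xu; have := two_dot_transl_perp_le Gx xu.1.
by rewrite (perp_part_dot xu); lra.
Qed.

Lemma gamma1_perp_part_eq0 x u : gamma1 Gam V x -> perp_part V x.2 u -> u = @vzero n.
Proof.
move=> [Gx xfix] xu; apply: dot_self_eq0.
have ox : Defs.orthogonal x.1 by apply: Gam_sub.1.
apply: (bounded_multiples_eq0 (c := D + dot u u)) => [|m]; first exact: dot_self_ge0.
have := two_dot_transl_perp_le (esubgroup_epow m Gam_sub Gx) xu.1.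
rewrite dot_epow_transl ?xfix ?(perp_part_dot xu) //; last by case: xu.
by rewrite RplusE; have := mulr_ge0 (ler0n R m) (dot_self_ge0 u); lra.
Qed.

End PerpBound.

Local Open Scope R_scope.

Theorem lemma3p2 (n : nat) (Gam : euc n -> Prop)
  (V : vec n -> Prop) (T : mat n -> Prop) :
  esubgroup Gam -> ediscrete Gam -> fixed_point_free Gam ->
  (* Wolf's theorem: Gamma^* is normal of finite index in Gamma *)
  normal_in (gamstar Gam) Gam -> finite_index (gamstar Gam) Gam ->
  subspace V -> toral T ->
  (forall h v, T h -> V v -> mapp h v = v) ->
  (forall x, gamstar Gam x -> T x.1 /\ V x.2) ->
  iso_to_lattice (gamstar Gam) V ->
  (exists C : R, forall x u, Gam x -> perp_part V x.2 u -> vnorm u <= C) /\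
  (forall x u, gamma1 Gam V x -> perp_part V x.2 u -> u = @vzero n).
Proof.
move=> Gam_sub _ _ star_normal [reps Gam_cosets] _ [T_orth _] _ star_TV _.
split; last exact: gamma1_perp_part_eq0 Gam_sub star_normal Gam_cosets T_orth star_TV.
exists (sqrt (transl_sqnorm_sum reps)) => x u Gx xu.
apply: sqrt_le_1_alt; apply/RleP.
exact: (perp_part_sqnorm_le star_normal Gam_cosets T_orth star_TV Gx xu).
Qed.
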